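(* Let $(R,\mathfrak{m},k)$ be a Noetherian local ring and let $I,J$ be ideals of $R$ such that $J\mathfrak{m}\not\subseteq I\mathfrak{m}$. Then $I+J\mathfrak{m}$ is a Burch ideal. In particular, if $\dim R/I>0$ and $\dim R/J=0$, then $I+J\mathfrak{m}$ is a Burch ideal.
   Context: An ideal $L$ of a local ring $(R,\mathfrak{m})$ is called Burch if $L\mathfrak{m}:\mathfrak{m}\neq L:\mathfrak{m}$ (equivalently, $L\mathfrak{m}\neq (L:\mathfrak{m})\mathfrak{m}$). Here $A:B=\{r\in R: rB\subseteq A\}$. *)

From mathcomp Require Import all_boot all_algebra.
Set Implicit Arguments. Unset Strict Implicit. Unset Printing Implicit Defensive.
Import GRing.Theory.
Local Open Scope ring_scope.

Section Ideals.
Variable R : comNzRingType.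

Definition subsetR (A B : R -> Prop) : Prop := forall x, A x -> B x.
Definition eqsetR (A B : R -> Prop) : Prop := forall x, A x <-> B x.

Definition is_ideal (I : R -> Prop) : Prop :=
  [/\ I 0, (forall x y, I x -> I y -> I (x + y)) & (forall a x, I x -> I (a * x))].

Definition proper_ideal (I : R -> Prop) : Prop := is_ideal I /\ ~ I 1.

Definition maximal_ideal (M : R -> Prop) : Prop :=
  proper_ideal M /\
  (forall N, is_ideal N -> subsetR M N -> eqsetR N M \/ eqsetR N (fun _ => True)).

Definition prime_ideal (P : R -> Prop) : Prop :=
  proper_ideal P /\ (forall a b, P (a * b) -> P a \/ P b).

Definition local_ring_with (m : R -> Prop) : Prop :=
  maximal_ideal m /\ (forall M, maximal_ideal M -> eqsetR M m).

Definition noetherian_ring : Prop :=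
  forall I : nat -> R -> Prop,
    (forall n, is_ideal (I n)) -> (forall n, subsetR (I n) (I n.+1)) ->
    exists N, forall n, (N <= n)%N -> subsetR (I n) (I N).

Definition sum_ideal (I J : R -> Prop) : R -> Prop :=
  fun x => exists a b, [/\ I a, J b & x = a + b].

Inductive prod_ideal (I J : R -> Prop) : R -> Prop :=
  | prod_ideal_mul a b : I a -> J b -> prod_ideal I J (a * b)
  | prod_ideal_0 : prod_ideal I J 0
  | prod_ideal_add x y : prod_ideal I J x -> prod_ideal I J y -> prod_ideal I J (x + y).

Definition colon (A B : R -> Prop) : R -> Prop :=
  fun r => forall b, B b -> A (r * b).

Definition burch (m L : R -> Prop) : Prop :=
  ~ eqsetR (colon (prod_ideal L m) m) (colon L m).

(* Krull dimension of R/I via chains of primes containing I: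
   dim R/I >= n  iff there is a chain P_0 ⊊ P_1 ⊊ ... ⊊ P_n of primes containing I *)
Definition dim_quot_ge (I : R -> Prop) (n : nat) : Prop :=
  exists P : nat -> R -> Prop,
    (forall i, (i <= n)%N -> prime_ideal (P i) /\ subsetR I (P i)) /\
    (forall i, (i < n)%N -> subsetR (P i) (P i.+1) /\ ~ subsetR (P i.+1) (P i)).

Definition dim_quot_pos (I : R -> Prop) : Prop := dim_quot_ge I 1.
Definition dim_quot_zero (I : R -> Prop) : Prop := dim_quot_ge I 0 /\ ~ dim_quot_ge I 1.

End Ideals.

(* If L = I + Jm were not Burch, then J ⊆ L : m = Lm : m, hence
   Jm ⊆ Lm ⊆ Im + (Jm)m, and Nakayama's lemma (Jm is finitely generated and
   1 - m consists of units) forces Jm ⊆ Im.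
   For the second claim take primes P0 ⊊ P1 containing I.  If Jm ⊆ Im then
   Jm ⊆ P0, so J ⊆ P0 or m ⊆ P0.  In the first case P0 ⊊ P1 shows dim R/J > 0;
   in the second P0 = m is maximal, which leaves no room for P1. *)
From Stdlib Require Import Classical ClassicalEpsilon.
From mathcomp Require Import all_boot all_algebra.
From mathcomp Require Import ring.
Set Implicit Arguments. Unset Strict Implicit. Unset Printing Implicit Defensive.
Import GRing.Theory.
Local Open Scope ring_scope.

Section IdealTheory.
Variable R : comNzRingType.
Implicit Types (I J A L M P m : R -> Prop) (l : seq R).

Lemma ideal0 I : is_ideal I -> I 0.
Proof. by case. Qed.

Lemma idealD I x y : is_ideal I -> I x -> I y -> I (x + y).
Proof. by case=> _ hD _; apply: hD. Qed.

Lemma idealMl I a x : is_ideal I -> I x -> I (a * x).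
Proof. by case=> _ _ hM; apply: hM. Qed.

Lemma idealMr I a x : is_ideal I -> I x -> I (x * a).
Proof. by rewrite mulrC; apply: idealMl. Qed.

Lemma sum_ideal_ideal I J : is_ideal I -> is_ideal J -> is_ideal (sum_ideal I J).
Proof.
move=> hI hJ; split.
- by exists 0, 0; rewrite addr0; split => //; apply: ideal0.
- move=> _ _ [a [b [Ia Jb ->]]] [c [d [Ic Jd ->]]].
  by exists (a + c), (b + d); rewrite addrACA; split => //; apply: idealD.
- move=> r _ [a [b [Ia Jb ->]]].
  by exists (r * a), (r * b); rewrite mulrDr; split => //; apply: idealMl.
Qed.

Lemma sum_ideal_subl I J : is_ideal J -> subsetR I (sum_ideal I J).
Proof. by move=> hJ x Ix; exists x, 0; rewrite addr0; split => //; apply: ideal0. Qed.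

Lemma sum_ideal_subr I J : is_ideal I -> subsetR J (sum_ideal I J).
Proof. by move=> hI x Jx; exists 0, x; rewrite add0r; split => //; apply: ideal0. Qed.

Lemma sum_ideal_min I J A :
  is_ideal A -> subsetR I A -> subsetR J A -> subsetR (sum_ideal I J) A.
Proof.
by move=> hA IA JA _ [a [b [Ia Jb ->]]]; apply: idealD; [| apply: IA | apply: JA].
Qed.

Lemma prod_ideal_ideal I J : is_ideal J -> is_ideal (prod_ideal I J).
Proof.
move=> hJ; split; [exact: prod_ideal_0 | exact: prod_ideal_add |].
move=> r x; elim=> [a b Ia Jb | | x1 x2 _ h1 _ h2].
- by rewrite mulrCA; apply: prod_ideal_mul => //; apply: idealMl.
- by rewrite mulr0; apply: prod_ideal_0.
- by rewrite mulrDr; apply: prod_ideal_add.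
Qed.

Lemma prod_ideal_min I J A :
  is_ideal A -> (forall a b, I a -> J b -> A (a * b)) -> subsetR (prod_ideal I J) A.
Proof.
move=> hA hIJ x; elim=> [a b | | x1 x2 _ h1 _ h2]; first exact: hIJ.
- exact: ideal0.
- exact: idealD.
Qed.

Lemma prod_ideal_subl I J : is_ideal I -> subsetR (prod_ideal I J) I.
Proof. by move=> hI; apply: prod_ideal_min => // a b Ia _; apply: idealMr. Qed.

Lemma prod_idealSl I I' J : subsetR I I' -> subsetR (prod_ideal I J) (prod_ideal I' J).
Proof.
move=> II' x; elim=> [a b Ia Jb | | x1 x2 _ h1 _ h2].
- by apply: prod_ideal_mul => //; apply: II'.
- exact: prod_ideal_0.
- exact: prod_ideal_add.
Qed.

Lemma prod_sum_ideal_sub I J m : is_ideal m ->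
  subsetR (prod_ideal (sum_ideal I J) m)
          (sum_ideal (prod_ideal I m) (prod_ideal J m)).
Proof.
move=> hm; apply: prod_ideal_min.
  by apply: sum_ideal_ideal; apply: prod_ideal_ideal.
move=> _ b [a [c [Ia Jc ->]]] mb; exists (a * b), (c * b); rewrite mulrDl.
by split => //; apply: prod_ideal_mul.
Qed.

Lemma prime_prod_ideal_sub P I J :
  prime_ideal P -> subsetR (prod_ideal I J) P -> subsetR I P \/ subsetR J P.
Proof.
move=> [_ hP] IJP; case: (classic (subsetR I P)) => [IP | nIP]; first by left.
right => b Jb; apply: NNPP => nPb; apply: nIP => a Ia.
by case: (hP a b (IJP _ (prod_ideal_mul Ia Jb))).
Qed.

Lemma maximal_ideal_proper_sup M P :
  maximal_ideal M -> proper_ideal P -> subsetR M P -> subsetR P M.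
Proof.
move=> [_ hmax] [hP P1] MP x Px.
by case: (hmax P hP MP) => e; [apply/e | case: P1; apply/e].
Qed.

Fixpoint seq_ideal l : R -> Prop :=
  if l is a :: l' then fun x => exists r y, seq_ideal l' y /\ x = r * a + y
  else fun x => x = 0.

Lemma seq_ideal_ideal l : is_ideal (seq_ideal l).
Proof.
elim: l => [|a l IH] /=.
  by split=> // [x y -> -> | r x ->]; rewrite ?addr0 ?mulr0.
split.
- by exists 0, 0; rewrite mul0r addr0; split => //; apply: ideal0.
- move=> _ _ [r [u [hu ->]]] [s [v [hv ->]]].
  by exists (r + s), (u + v); rewrite mulrDl addrACA; split => //; apply: idealD.
- move=> c _ [r [u [hu ->]]].
  by exists (c * r), (c * u); rewrite mulrDr mulrA; split => //; apply: idealMl.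
Qed.

Lemma seq_ideal_cons a l : subsetR (seq_ideal l) (seq_ideal (a :: l)).
Proof. by move=> x hx; exists 0, x; rewrite mul0r add0r. Qed.

Lemma seq_ideal_head a l : seq_ideal (a :: l) a.
Proof.
by exists 1, 0; rewrite mul1r addr0; split => //; apply: ideal0 (seq_ideal_ideal l).
Qed.

Lemma seq_ideal_min l A :
  is_ideal A -> (forall x, x \in l -> A x) -> subsetR (seq_ideal l) A.
Proof.
move=> hA; elim: l => [|a l IH] lA x /=; first by move->; apply: ideal0.
move=> [r [y [hy ->]]]; apply: idealD => //.
  by apply: idealMl => //; apply: lA; rewrite mem_head.
by apply: IH hy => z hz; apply: lA; rewrite in_cons hz orbT.
Qed.

Lemma prod_seq_ideal_cons m a l x : is_ideal m ->
  prod_ideal (seq_ideal (a :: l)) m x ->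
  exists mu q, [/\ m mu, prod_ideal (seq_ideal l) m q & x = mu * a + q].
Proof.
move=> hm; elim=> [_ b [r [y [hy ->]]] mb | |].
- exists (r * b), (y * b); split; [exact: idealMl | exact: prod_ideal_mul | ring].
- by exists 0, 0; split; [exact: ideal0 | exact: prod_ideal_0 | ring].
- move=> _ _ _ [mu1 [q1 [m1 h1 ->]]] _ [mu2 [q2 [m2 h2 ->]]].
  exists (mu1 + mu2), (q1 + q2); split; [exact: idealD | exact: prod_ideal_add | ring].
Qed.

Definition sub_jacobson m : Prop := forall mu, m mu -> exists v, v * (1 - mu) = 1.

Lemma nakayama_seq m A l : is_ideal m -> is_ideal A -> sub_jacobson m ->
  subsetR (seq_ideal l) (sum_ideal A (prod_ideal (seq_ideal l) m)) ->
  subsetR (seq_ideal l) A.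
Proof.
move=> hm hA hjac; elim: l => [|a l IH] hl; first exact: seq_ideal_min.
set B := sum_ideal A (prod_ideal (seq_ideal l) m).
have hB : is_ideal B by apply: sum_ideal_ideal => //; apply: prod_ideal_ideal.
(* Since 1 - mu is a unit, the generator a already lies in A + (l)m. *)
have aB : B a.
  have [al [p [Aal hp Ea]]] := hl a (seq_ideal_head a l).
  have [mu [q [mmu hq Ep]]] := prod_seq_ideal_cons hm hp.
  have [v hv] := hjac mu mmu.
  have Ua : (1 - mu) * a = al + q by rewrite mulrBl mul1r {1}Ea Ep; ring.
  rewrite -[a]mul1r -hv -mulrA Ua; apply: idealMl => //.
  by exists al, q.
have lB : subsetR (seq_ideal (a :: l)) B.
  move=> x /hl; apply: sum_ideal_min => //.
    exact: sum_ideal_subl (prod_ideal_ideal _ hm).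
  move=> _ /(prod_seq_ideal_cons hm)[mu [q [_ hq ->]]].
  by apply: idealD => //; [apply: idealMl | apply: sum_ideal_subr].
have lA := IH (fun x hx => lB x (seq_ideal_cons a hx)).
have BA : subsetR B A.
  apply: sum_ideal_min => //; apply: prod_ideal_min => // u b hu _.
  by apply: idealMr => //; apply: lA.
by move=> x /lB /BA.
Qed.

Lemma noetherian_maximal_element (Pr : (R -> Prop) -> Prop) X0 :
  noetherian_ring R -> is_ideal X0 -> Pr X0 ->
  exists X, [/\ is_ideal X, Pr X &
    forall Y, is_ideal Y -> Pr Y -> subsetR X Y -> subsetR Y X].
Proof.
move=> hN hX0 PrX0; apply: NNPP => nomax.
pose ext X Y := [/\ is_ideal Y, Pr Y, subsetR X Y & ~ subsetR Y X].
have extE X : is_ideal X -> Pr X -> exists Y, ext X Y.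
  move=> hX PrX; apply: NNPP => noext; apply: nomax; exists X; split=> // Y hY PrY XY.
  by apply: NNPP => YX; apply: noext; exists Y.
pose C n := iter n (fun X => epsilon (inhabits X0) (ext X)) X0.
have invC n : is_ideal (C n) /\ Pr (C n).
  elim: n => [|n [hn Prn]]; first by [].
  by case: (epsilon_spec (inhabits X0) (ext (C n)) (extE _ hn Prn)).
have extC n : ext (C n) (C n.+1).
  by apply: epsilon_spec; case: (invC n); apply: extE.
have CS n : subsetR (C n) (C n.+1) by case: (extC n).
have [N CN] := hN C (fun n => (invC n).1) CS.
by case: (extC N) => _ _ _; apply; apply: CN.
Qed.


Lemma noetherian_exists_maximal Q : noetherian_ring R -> proper_ideal Q ->
  exists M, maximal_ideal M /\ subsetR Q M.
Proof.
move=> hN hQ.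
have [M [hM [pM QM] Mmax]] := noetherian_maximal_element
  (Pr := fun Y => proper_ideal Y /\ subsetR Q Y) hN hQ.1 (conj hQ (fun x Qx => Qx)).
exists M; split => //; split => // N hNi MN.
case: (classic (N 1)) => N1.
  by right => x; split => // _; rewrite -[x]mulr1; apply: idealMl.
left => x; split; last exact: MN.
by apply: Mmax => //; split => // y /QM /MN.
Qed.

Lemma noetherian_seq_ideal N : noetherian_ring R -> is_ideal N ->
  exists l, eqsetR N (seq_ideal l).
Proof.
move=> hN hNi.
pose fg Y := exists2 l, (forall x, x \in l -> N x) & Y = seq_ideal l.
have fg0 : fg (seq_ideal [::]) by exists [::].
have [_ [_ [l lN ->] lmax]] := noetherian_maximal_element hN (seq_ideal_ideal _) fg0.
exists l => x; split; last exact: seq_ideal_min.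
move=> Nx; apply: (lmax (seq_ideal (x :: l))) (seq_ideal_head x l).
- exact: seq_ideal_ideal.
- by exists (x :: l) => // y; rewrite in_cons => /orP[/eqP -> | /lN].
- exact: seq_ideal_cons.
Qed.

Lemma local_sub_jacobson m : noetherian_ring R -> local_ring_with m ->
  sub_jacobson m.
Proof.
move=> hN [[[hm m1] _] mmax] mu mmu; apply: NNPP => nounit.
have hQ : proper_ideal (seq_ideal [:: 1 - mu]).
  split; first exact: seq_ideal_ideal.
  by move=> [v [_ [-> e]]]; apply: nounit; exists v; rewrite [RHS]e addr0.
have [M [hM QM]] := noetherian_exists_maximal hN hQ.
have m1mu : m (1 - mu) by apply/(mmax M hM); apply: QM; apply: seq_ideal_head.
by apply: m1; rewrite -(subrK mu 1); apply: idealD.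
Qed.

Lemma nakayama m A N : noetherian_ring R ->
  is_ideal m -> is_ideal A -> is_ideal N -> sub_jacobson m ->
  subsetR N (sum_ideal A (prod_ideal N m)) -> subsetR N A.
Proof.
move=> hN hm hA hNi hjac NAN.
have [l eN] := noetherian_seq_ideal hN hNi.
have lA : subsetR (seq_ideal l) A.
  apply: (nakayama_seq hm hA hjac) => x /eN /NAN [a [b [Aa Nb ->]]].
  by exists a, b; split => //; apply: prod_idealSl Nb => y /eN.
by move=> x /eN /lA.
Qed.

Lemma colon_eq_prod_sub m L J : is_ideal m ->
  eqsetR (colon (prod_ideal L m) m) (colon L m) ->
  subsetR (prod_ideal J m) L -> subsetR (prod_ideal J m) (prod_ideal L m).
Proof.
move=> hm colonE JL; apply: prod_ideal_min; first exact: prod_ideal_ideal.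
move=> a b Ja mb.
have aLm : colon (prod_ideal L m) m a.
  by apply/colonE => c mc; apply: JL; apply: prod_ideal_mul.
exact: aLm.
Qed.

Lemma burch_sum_prod_ideal m I J : noetherian_ring R -> local_ring_with m ->
  is_ideal I -> is_ideal J -> ~ subsetR (prod_ideal J m) (prod_ideal I m) ->
  burch m (sum_ideal I (prod_ideal J m)).
Proof.
move=> hN hloc hI hJ JmIm colonE; apply: JmIm.
have hm : is_ideal m by case: hloc => [[[]]].
have JmLm := colon_eq_prod_sub hm colonE (sum_ideal_subr hI).
apply: (nakayama hN hm (prod_ideal_ideal I hm) (prod_ideal_ideal J hm)
          (local_sub_jacobson hN hloc)).
by move=> x /JmLm /(prod_sum_ideal_sub hm).
Qed.

Lemma dim_quot_pos_prod_not_sub m I J : maximal_ideal m -> is_ideal I ->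
  dim_quot_pos I -> ~ dim_quot_ge J 1 ->
  ~ subsetR (prod_ideal J m) (prod_ideal I m).
Proof.
move=> hmax hI [P [primeP chainP]] notdimJ JmIm.
have [[P0 IP0] [P1 _]] := (primeP 0%N isT, primeP 1%N isT).
have [P01 nP10] := chainP 0%N isT.
have JmP0 : subsetR (prod_ideal J m) (P 0%N).
  by move=> x /JmIm /(prod_ideal_subl hI) /IP0.
case: (prime_prod_ideal_sub P0 JmP0) => [JP0 | mP0].
- apply: notdimJ; exists P; split => // -[|[|i]] // _.
  by split => // x /JP0 /P01.
- apply: nP10 => x /(maximal_ideal_proper_sup hmax P1.1) P1m; apply/mP0/P1m.
  by move=> y /mP0 /P01.
Qed.

End IdealTheory.

Theorem proposition3p7 (R : comNzRingType) (m I J : R -> Prop) :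
  noetherian_ring R -> local_ring_with m ->
  is_ideal I -> is_ideal J ->
  (~ subsetR (prod_ideal J m) (prod_ideal I m) ->
     burch m (sum_ideal I (prod_ideal J m))) /\
  (dim_quot_pos I -> dim_quot_zero J ->
     burch m (sum_ideal I (prod_ideal J m))).
Proof.
move=> hN hloc hI hJ; have burchL := burch_sum_prod_ideal hN hloc hI hJ.
split => // posI [_ notdimJ]; apply: burchL.
exact: dim_quot_pos_prod_not_sub hloc.1 hI posI notdimJ.
Qed.
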